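(* Let $D$ be an in-round oriented graph. Then $D$ has dichromatic number at most $2$. More precisely, for every vertex $x$ there exists a colouring of $V(D)$ with two colours in which each colour class induces an acyclic subdigraph and $\{x\}\cup x^+$ is monochromatic.
   Context: Digraphs are finite, no loops, no parallel arcs; an oriented graph has no digon. $x^+$ is the out-neighbourhood of $x$. A cyclic order of $V$ is an equivalence class of linear orders under cyclic shifts; for vertices $u,v$, $[u,v]$ is the set of vertices met going forward from $u$ to $v$ in the cyclic order (inclusive) and $]u,v[=[u,v]\setminus\{u,v\}$. An oriented graph is in-round if there is a cyclic order of its vertices such that for every arc $xy$ and every $z\in\,]x,y[$, $zy$ is an arc. The dichromatic number is the least number of colours in a vertex colouring where each colour class induces a subdigraph with no directed cycle. *)

From mathcomp Require Import all_boot.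
Set Implicit Arguments. Unset Strict Implicit. Unset Printing Implicit Defensive.

(* Finiteness and absence of parallel arcs are
   built in; no loops and no digons are explicit hypotheses. *)
Definition loopless (T : finType) (E : rel T) : Prop := forall x, ~~ E x x.
Definition oriented (T : finType) (E : rel T) : Prop :=
  loopless E /\ forall x y, E x y -> ~~ E y x.

(* A cyclic order is represented by any of its linear orders, given by a
   bijection pos : T -> 'I_#|T| (the position of each vertex).
   cint_open pos x y z  <=>  z \in ]x,y[ , i.e. z is met strictly between x
   and y going forward from x in the cyclic order (x <> y case). *)
Definition cint_open (T : finType) (pos : T -> 'I_#|T|) (x y z : T) : bool :=
  if pos x < pos y then (pos x < pos z) && (pos z < pos y)
  else (pos x < pos z) || (pos z < pos y).

Definition in_round (T : finType) (E : rel T) : Prop :=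
  exists pos : T -> 'I_#|T|, bijective pos /\
    forall x y z, E x y -> cint_open pos x y z -> E z y.

Definition acyclic_in (T : finType) (E : rel T) (A : {set T}) : Prop :=
  forall s : seq T, s != [::] -> all (fun v => v \in A) s -> ~~ cycle E s.

Definition dicolouring (T : finType) (E : rel T) (k : nat) (c : T -> 'I_k) : Prop :=
  forall i : 'I_k, acyclic_in E [set v | c v == i].

Definition dichromatic_le (T : finType) (E : rel T) (k : nat) : Prop :=
  exists c : T -> 'I_k, dicolouring E c.

From mathcomp Require Import all_boot zify.
Set Implicit Arguments.
Unset Strict Implicit.

(* Fix the cyclic order of an in-round oriented graph D and a
   vertex x, and let rank v be the forward distance from x to v, so that the
   cyclic order becomes the linear order x = v_0 < v_1 < ... by rank.  Call an
   arc uv backward if rank v < rank u.  Colour v with colour 1 when v lies in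
   the initial segment [x, w] ending at the farthest out-neighbour w of x, and
   with colour 0 otherwise.  The in-round property shows that every backward
   arc goes from colour 0 to colour 1: its head v lies in [x, w] because x is
   between u and v (so xv is an arc), and its tail u cannot lie in [x, w]
   because otherwise v and w would form a digon.  Hence along every arc inside
   a colour class the rank increases strictly, so each class is acyclic; the
   set {x} u x^+ lies in colour 1 by construction. *)

Section Rank.
Variables (T : finType) (pos : T -> 'I_#|T|) (x : T).

Definition rank (t : T) : nat :=
  if pos x <= pos t then pos t - pos x else #|T| + pos t - pos x.

Lemma rank_base : rank x = 0.
Proof. by rewrite /rank leqnn subnn. Qed.

Lemma rank_eq_pos u v : rank u = rank v -> pos u = pos v.
Proof.
move=> ruv; apply: ord_inj; move: ruv.
have := ltn_ord (pos x); have := ltn_ord (pos u); have := ltn_ord (pos v).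
by rewrite /rank; repeat case: ifP => ?; move=> *; lia.
Qed.

(* c lies in ]a,b[ as soon as a, c, b appear in this cyclic succession when
   read by rank; betweenness is invariant under rotating the base point. *)
Lemma cint_open_rank a b c :
  [|| rank a < rank c < rank b, rank c < rank b < rank a
    | rank b < rank a < rank c] ->
  cint_open pos a b c.
Proof.
have := ltn_ord (pos x); have := ltn_ord (pos a).
have := ltn_ord (pos b); have := ltn_ord (pos c).
by rewrite /cint_open /rank; repeat case: ifP => ?; move=> *; lia.
Qed.

End Rank.

(* A vertex set is acyclic as soon as some potential strictly increases along
   every arc inside it: around a directed cycle the potential would have to
   exceed itself. *)
Lemma acyclic_in_of_increasing (T : finType) (E : rel T) (A : {set T})
    (f : T -> nat) :
  {in A &, forall u v, E u v -> f u < f v} -> acyclic_in E A.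
Proof.
move=> f_incr [//|a s] _ sA; apply/negP; rewrite /= => cycle_as.
have f_path : path (relpre f ltn) a (rcons s a).
  apply: (sub_in_path (P := mem A)) cycle_as => //.
  by move: sA => /= /andP[aA sA]; rewrite /= all_rcons; apply/and3P.
have := order_path_min (fun y x z => @ltn_trans (f y) (f x) (f z)) f_path.
by rewrite all_rcons /= ltnn.
Qed.

Section InRoundColouring.
Variables (T : finType) (E : rel T) (pos : T -> 'I_#|T|).
Hypothesis E_oriented : oriented E.
Hypothesis pos_inj : injective pos.
Hypothesis E_in_round : forall x y z, E x y -> cint_open pos x y z -> E z y.
Variable x : T.

Local Notation rank := (rank pos x).

Lemma rank_inj : injective rank.
Proof. by move=> u v /rank_eq_pos /pos_inj. Qed.

Lemma rank_gt0 v : v != x -> 0 < rank v.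
Proof.
by rewrite lt0n; apply: contra => /eqP rv0; apply/eqP/rank_inj; rewrite rv0 rank_base.
Qed.

Definition reach (v : T) : bool :=
  (v == x) || [exists w, E x w && (rank v <= rank w)].

Lemma reach_out_neighbour y : E x y -> reach y.
Proof. by move=> Exy; apply/orP; right; apply/existsP; exists y; rewrite Exy leqnn. Qed.

(* The head of a backward arc uv is reached: x lies in ]u,v[, so xv is an arc. *)
Lemma backward_arc_head u v : E u v -> rank v < rank u -> reach v.
Proof.
move=> Euv ltvu; case: (eqVneq v x) => [-> | vx]; first by rewrite /reach eqxx.
apply: reach_out_neighbour; apply: E_in_round Euv _.
apply: (cint_open_rank (x := x)).
by rewrite rank_base rank_gt0 ?ltvu ?orbT.
Qed.

(* The tail of a backward arc uv is not reached: if rank u <= rank y with xy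
   an arc, then vy is an arc (v lies in ]x,y[) and yv is an arc (y lies in
   ]u,v[, or y = u), giving a digon. *)
Lemma backward_arc_tail u v : E u v -> rank v < rank u -> ~~ reach u.
Proof.
have [_ E_anti] := E_oriented.
move=> Euv ltvu; apply/negP; case/orP=> [/eqP ux | /existsP[y /andP[Exy leuy]]].
  by move: ltvu; rewrite ux rank_base.
have Evy : E v y.
  case: (eqVneq v x) => [-> // | vx]; apply: E_in_round Exy _.
  by apply: (cint_open_rank (x := x)); rewrite rank_base rank_gt0 // (leq_trans ltvu leuy).
case: (eqVneq y u) => [yu | yu]; first by move: (E_anti _ _ Euv); rewrite -yu Evy.
have ltuy : rank u < rank y.
  by rewrite ltn_neqAle leuy andbT; apply: contra yu => /eqP/rank_inj ->.
have Eyv : E y v.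
  apply: E_in_round Euv _; apply: (cint_open_rank (x := x)).
  by rewrite ltvu ltuy !orbT.
by move: (E_anti _ _ Eyv); rewrite Evy.
Qed.

Lemma rank_increasing_in_class u v :
  reach u = reach v -> E u v -> rank u < rank v.
Proof.
have [E_loopless _] := E_oriented.
move=> same_class Euv; rewrite ltn_neqAle; apply/andP; split.
  apply: contraNneq (E_loopless u) => /rank_inj uv; by rewrite {2}uv.
rewrite leqNgt; apply/negP => ltvu.
by move: (backward_arc_tail Euv ltvu); rewrite same_class (backward_arc_head Euv ltvu).
Qed.

Definition colour (v : T) : 'I_2 := @Ordinal 2 (reach v) (leq_b1 _).

Lemma colour_dicolouring : dicolouring E colour.
Proof.
move=> i; apply: (@acyclic_in_of_increasing _ _ _ rank) => u v.
rewrite !inE => /eqP cu /eqP cv; apply: rank_increasing_in_class.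
by have /= := congr1 val (etrans cu (esym cv)); case: (reach u) (reach v) => [] [].
Qed.

Lemma colour_out_neighbour y : E x y -> colour y = colour x.
Proof. by move=> Exy; apply: val_inj; rewrite /= reach_out_neighbour // /reach eqxx. Qed.

End InRoundColouring.

Theorem proposition3p4 (T : finType) (E : rel T) :
  oriented E -> in_round E ->
  dichromatic_le E 2 /\
  (forall x : T, exists c : T -> 'I_2,
      dicolouring E c /\ (forall y, E x y -> c y = c x)).
Proof.
move=> E_oriented [pos [pos_bij E_in_round]].
have pos_inj : injective pos by exact: bij_inj.
have colouring_at x : exists c : T -> 'I_2,
    dicolouring E c /\ (forall y, E x y -> c y = c x).
  exists (colour E pos x); split.
    exact: colour_dicolouring.
  exact: colour_out_neighbour.
split=> //; case: (pickP (fun _ : T => true)) => [x _ | T_empty].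
  by have [c [c_dicol _]] := colouring_at x; exists c.
by exists (fun _ => ord0) => i [// | a s]; have := T_empty a.
Qed.
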